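(* For all integers $n\ge0$ and $m>nt$, $\mathcal{L}^{(t)}_T\big(T^{(t)}_m(x)\,T^{(t)}_n(x)\big)=0$; and for all $n\ge1$, $\mathcal{L}^{(t)}_T\big(T^{(t)}_{nt}(x)\,T^{(t)}_n(x)\big)=t+1$.
   Context: Fix an integer $t\ge1$. For $n\ge1$ let $C_n$ be the $n$-cycle with vertices $1,\dots,n$ (indices mod $n$). If $n\ge t+1$, the $t$-paths in $C_n$ are the $n$ sequences $(i,i+1,\dots,i+t)$ mod $n$, $i=1,\dots,n$; if $n\le t$ there are none. Define $T^{(t)}_n(x)=\sum_F(-1)^{|F|}x^{\,n-(t+1)|F|}$ over all families $F$ of $t$-paths in $C_n$ with pairwise disjoint vertex sets, $T^{(t)}_0=1$. Let $\mathcal{L}^{(t)}_T$ be the linear functional on polynomials with $\mathcal{L}^{(t)}_T(x^{(t+1)j})=\binom{(t+1)j}{j}$ for $j\ge0$ and $\mathcal{L}^{(t)}_T(x^m)=0$ if $t+1\nmid m$. *)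

From HB Require Import structures.
From mathcomp Require Import all_boot all_order all_algebra.
Set Implicit Arguments. Unset Strict Implicit. Unset Printing Implicit Defensive.
Import Order.TTheory GRing.Theory Num.Theory.

(* Vertices of C_n are 'I_n = {0,..,n-1} (relabelling 1..n, indices mod n).
   The t-path starting at i is (i, i+1, ..., i+t) mod n; its vertex set is
   { j | (j - i) mod n <= t }. *)
Definition tpath_verts (n t : nat) (i : 'I_n) : {set 'I_n} :=
  [set j : 'I_n | (j + n - i) %% n <= t].

(* A family of t-paths is given by the set of starting vertices; t-paths exist
   only when n >= t+1; the paths must have pairwise disjoint vertex sets. *)
Definition tfamily (n t : nat) (F : {set 'I_n}) : bool :=
  ((t < n) || (F == set0)) &&
  [forall i in F, forall j in F,
      (i != j) ==> [disjoint tpath_verts t i & tpath_verts t j]].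

Local Open Scope ring_scope.

Definition Tpoly (t n : nat) : {poly int} :=
  \sum_(F : {set 'I_n} | tfamily t F)
     ((-1) ^+ #|F|) *: 'X^(n - t.+1 * #|F|)%N.

Definition LT (t : nat) (p : {poly int}) : int :=
  \sum_(i < size p)
     p`_i * (if (t.+1 %| i)%N then ('C(i, i %/ t.+1))%:Z else 0).

(* Expanding T_n, L(T_m T_n) is a signed sum, over the t-families G of C_n, of
   the moments M_m(k) = L(T_m x^k) with k = n - (t+1)|G| (LT_Tpoly_mul).  The
   proof computes these moments; the cycle C_(m+1) is handled as 'I_m.+1,
   i.e. as the cyclic group Z/(m+1), so that "s steps after i" is i + s.
   - The term of a family F in M_(m+1)(k) is C(N, N/(t+1)), N = m+1-(t+1)|F|+k,
     nonzero only if (t+1) | m+1+k.  By Vandermonde's identity it is a sum,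
     over the sets D of vertices not covered by F, of C(k, J - |F| - |D|),
     J = (m+1+k)/(t+1) (Lcoef_family).
   - A sign-reversing involution on these pairs (F, D), exchanging a path of F
     with its starting vertex in D, cancels every pair but those with F empty
     and D gap-free: no element of D is followed by t consecutive vertices
     outside D (signed_pairs_sum, Tmoment_gapfree).
   - A nonempty gap-free set D satisfies t|D| >= m+1, and when m+1 = nt the
     gap-free sets of size n are exactly the t residue classes mod t
     (gapfree_card, card_tight_gapfree).  Hence M_(m+1)(k) = 0 when
     tk < m+1 (Tmoment_vanish) and M_(nt)(n) = 1 + t (Tmoment_tight).
   In the theorem only the term G = set0 of the tight case survives. *)

From HB Require Import structures.
From mathcomp Require Import all_boot all_order all_algebra.
From mathcomp Require Import zify.
Import GRing.Theory Num.Theory.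
Set Implicit Arguments. Unset Strict Implicit. Unset Printing Implicit Defensive.
Local Open Scope ring_scope.

Lemma tfamily0 (n t : nat) : tfamily t (set0 : {set 'I_n}).
Proof. by rewrite /tfamily eqxx orbT; apply/forall_inP => i; rewrite inE. Qed.

Section CyclePaths.
Variables (m t : nat).
Local Notation V := 'I_m.+1.
Implicit Types (i j v : V) (F D : {set V}).

Definition res (s : nat) : V := inZp s.

Lemma val_res s : val (res s) = (s %% m.+1)%N. Proof. by []. Qed.

Lemma res0 : res 0 = 0. Proof. by apply: val_inj; rewrite /= mod0n. Qed.

Lemma resD a b : res (a + b) = res a + res b.
Proof. by apply: val_inj; rewrite /= modnDm. Qed.

Lemma res_val v : res (val v) = v. Proof. exact: valZpK. Qed.

Lemma val_subr i j : val (i - j) = ((i + m.+1 - j) %% m.+1)%N.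
Proof. by rewrite /= modnDmr addnBA // ltnW. Qed.

Lemma val_subr_le i j : (j <= i)%N -> val (i - j) = (i - j)%N.
Proof.
move=> ji; rewrite val_subr -addnBAC // modnDr modn_small //.
exact: leq_ltn_trans (leq_subr _ _) (ltn_ord i).
Qed.

Lemma res_decomp i j : j = i + res (val (j - i)%R).
Proof. by rewrite res_val addrC subrK. Qed.

Lemma mem_tpath i j : (j \in tpath_verts t i) = (val (j - i)%R <= t)%N.
Proof. by rewrite inE val_subr. Qed.

Lemma tpath_start i : i \in tpath_verts t i.
Proof. by rewrite mem_tpath subrr. Qed.

Lemma tpath_shift i s : (s <= t)%N -> i + res s \in tpath_verts t i.
Proof.
by move=> st; rewrite mem_tpath (addrC i) addrK val_res (leq_trans (leq_mod _ _)).
Qed.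

Lemma tpath_meet i j v :
  v \in tpath_verts t i -> v \in tpath_verts t j ->
  (i \in tpath_verts t j) || (j \in tpath_verts t i).
Proof.
rewrite !mem_tpath => vi vj.
have Eij : i - j = (v - j) - (v - i) by rewrite opprB [RHS]addrC addrA subrK.
have Eji : j - i = (v - i) - (v - j) by rewrite opprB [RHS]addrC addrA subrK.
case: (leqP (val (v - i)%R) (val (v - j)%R)) => h.
  by apply/orP; left; rewrite Eij val_subr_le // (leq_trans (leq_subr _ _) vj).
by apply/orP; right; rewrite Eji val_subr_le ?(ltnW h) // (leq_trans (leq_subr _ _) vi).
Qed.

Lemma val_subr_mod i j : (t %| m.+1)%N -> (val (i - j)%R + j = i %[mod t])%N.
Proof.
move=> tm; rewrite val_subr -modnDml (modn_dvdm _ tm) modnDml.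
rewrite subnK; last exact: leq_trans (ltnW (ltn_ord j)) (leq_addl _ _).
by rewrite -modnDmr (eqP tm) addn0.
Qed.

Definition tcover F : {set V} := \bigcup_(i in F) tpath_verts t i.

Lemma tcover_sub F i : i \in F -> tpath_verts t i \subset tcover F.
Proof. exact: bigcup_sup. Qed.

Lemma tcover0 : tcover set0 = set0.
Proof. by rewrite /tcover big_set0. Qed.

Lemma tcoverU1 F i : tcover (i |: F) = tpath_verts t i :|: tcover F.
Proof. by rewrite /tcover bigcup_setU big_set1. Qed.

Lemma tcoverD1 F i : i \in F -> tcover F = tpath_verts t i :|: tcover (F :\ i).
Proof. by move=> iF; rewrite -tcoverU1 setD1K. Qed.

Lemma tfamilyP F :
  (t < m.+1)%N ->
  (forall i j, i \in F -> j \in F -> i != j ->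
     [disjoint tpath_verts t i & tpath_verts t j]) ->
  tfamily t F.
Proof.
move=> tm dF; rewrite /tfamily tm; apply/forall_inP => i iF.
by apply/forall_inP => j jF; apply/implyP; apply: dF.
Qed.

Lemma tfamily_disjoint F i j :
  tfamily t F -> i \in F -> j \in F -> i != j ->
  [disjoint tpath_verts t i & tpath_verts t j].
Proof.
case/andP=> _ /forall_inP dF iF jF ij.
by move/forall_inP: (dF i iF) => /(_ j jF); rewrite ij.
Qed.

Lemma tfamily_lt F : tfamily t F -> F != set0 -> (t < m.+1)%N.
Proof. by case/andP => /orP[//|/eqP->]; rewrite eqxx. Qed.

Lemma tfamilyS F1 F2 : F1 \subset F2 -> tfamily t F2 -> tfamily t F1.
Proof.
move=> /subsetP sF hF; have [->|F1n0] := eqVneq F1 set0; first exact: tfamily0.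
apply: tfamilyP => [|i j /sF iF /sF jF]; last exact: tfamily_disjoint hF iF jF.
apply: (tfamily_lt hF); by case/set0Pn: F1n0 => i /sF iF; apply/set0Pn; exists i.
Qed.

Lemma card_tcover F : tfamily t F -> #|tcover F| = (t.+1 * #|F|)%N.
Proof.
move=> hF; have [->|Fn0] := eqVneq F set0; first by rewrite tcover0 !cards0 muln0.
have tm := tfamily_lt hF Fn0.
pose walk (p : V * 'I_t.+1) := p.1 + res p.2.
have -> : tcover F = walk @: setX F [set: 'I_t.+1].
  apply/setP => v; apply/bigcupP/imsetP => [[i iF vi]|[[i s]]].
    have vi' : (val (v - i)%R < t.+1)%N by rewrite ltnS -mem_tpath.
    by exists (i, Ordinal vi'); rewrite ?inE ?iF //= /walk /= -res_decomp.
  rewrite !inE /= andbT => iF ->; exists i => //.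
  by rewrite /walk tpath_shift // -ltnS.
rewrite card_in_imset ?cardsX ?cardsT ?card_ord 1?mulnC //.
move=> [i s] [j s']; rewrite !inE /= !andbT /walk /= => iF jF Eij.
have [eij|nij] := eqVneq i j.
  subst j; move/addrI/(congr1 val): Eij; rewrite !val_res !modn_small //.
  - by move=> Ess'; congr pair; apply: val_inj.
  - exact: leq_trans (ltn_ord s') tm.
  - exact: leq_trans (ltn_ord s) tm.
have vi : i + res s \in tpath_verts t i by rewrite tpath_shift // -ltnS.
have vj : i + res s \in tpath_verts t j by rewrite Eij tpath_shift // -ltnS.
by rewrite (disjointFr (tfamily_disjoint hF iF jF nij) vi) in vj.
Qed.

Lemma card_tcover_le F : tfamily t F -> (t.+1 * #|F| <= m.+1)%N.
Proof.
by move=> hF; rewrite -card_tcover // -[leqRHS](card_ord m.+1) max_card.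
Qed.

End CyclePaths.

Lemma disjoint_memP (T : finType) (A B : {set T}) :
  reflect (forall x, x \in A -> x \in B -> False) [disjoint A & B].
Proof.
apply: (iffP idP) => [dAB x xA xB|H]; first by rewrite (disjointFr dAB xA) in xB.
by rewrite disjoint_subset; apply/subsetP => x xA; rewrite inE; apply/negP; apply: H.
Qed.

Lemma sum_sign_reversing (T : finType) (P : pred T) (f : T -> T) (w : T -> int) :
  (forall x, P x -> P (f x)) -> (forall x, P x -> f (f x) = x) ->
  (forall x, P x -> f x != x -> w (f x) = - w x) ->
  \sum_(x | P x) w x = \sum_(x | P x && (f x == x)) w x.
Proof.
move=> Pf fK wf; rewrite (bigID (fun x => f x == x)) /=.
set S := \sum_(x | P x && (f x != x)) w x.
suff -> : S = 0 by rewrite addr0.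
have moved x :
    [&& P (f x), f (f x) != f x & f (f x) == x] = P x && (f x != x).
  apply/and3P/andP => [[Pfx ffx /eqP ffxE]|[Px fx]].
    have := Pf _ Pfx; rewrite ffxE => ->.
    by rewrite ffxE eq_sym in ffx.
  by rewrite Pf // fK // eq_sym.
have SN : S = - S.
  rewrite {1}/S (reindex_onto f f (P := fun x => P x && (f x != x))); last first.
    by move=> x /andP[Px _]; apply: fK.
  rewrite /S -sumrN; apply: eq_big => [x|x]; first by rewrite -andbA moved.
  by rewrite -andbA moved => /andP[Px fx]; apply: wf.
have : S *+ 2 == 0 by rewrite mulr2n {1}SN addNr.
by rewrite mulrn_eq0 => /eqP.
Qed.

Section Toggling.
Variables (m t : nat).
Local Notation V := 'I_m.+1.
Implicit Types (i j v : V) (F D : {set V}) (FD : {set V} * {set V}).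

Definition admissible FD := tfamily t FD.1 && [disjoint FD.2 & tcover t FD.1].

(* Vertex i is a free start of (F, D) if i is in D and its t-path meets no
   other vertex of D nor any vertex covered by F: the singleton i could be
   replaced by the whole t-path from i. *)
Definition free_start F D i :=
  [&& (t < m.+1)%N, i \in D & tpath_verts t i :&: (tcover t F :|: D) \subset [set i]].

Definition blocks FD := FD.1 :|: [set i | free_start FD.1 FD.2 i].

Definition toggle i FD :=
  if i \in FD.1 then (FD.1 :\ i, i |: FD.2) else (i |: FD.1, FD.2 :\ i).

Lemma free_startP F D i :
  reflect [/\ (t < m.+1)%N, i \in D &
           forall v, v \in tpath_verts t i -> (v \in tcover t F) || (v \in D) -> v = i]
          (free_start F D i).
Proof.
apply: (iffP and3P) => [[tm iD /subsetP sub]|[tm iD sub]]; split=> //.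
  by move=> v vi vFD; apply/set1P/sub; rewrite in_setI in_setU vi.
by apply/subsetP => v; rewrite in_setI in_setU => /andP[vi vFD]; apply/set1P/sub.
Qed.

Section TogglePath.
Variables (F D : {set V}) (i : V).
Hypotheses (adm : admissible (F, D)) (iF : i \in F).

Let hF : tfamily t F := proj1 (andP adm).
Let dD : [disjoint D & tcover t F] := proj2 (andP adm).

Let covF : tcover t F = tpath_verts t i :|: tcover t (F :\ i).
Proof. exact: tcoverD1. Qed.

Let notD v : v \in tpath_verts t i -> v \notin D.
Proof. by move=> vi; rewrite (disjointFl dD) // covF in_setU vi. Qed.

Let notF v : v \in tpath_verts t i -> v \notin tcover t (F :\ i).
Proof.
move=> vi; apply/bigcupP => -[j]; rewrite in_setD1 => /andP[ji jF] vj.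
by rewrite (disjointFr (tfamily_disjoint hF jF iF ji) vj) in vi.
Qed.

Lemma toggle_path_admissible : admissible (F :\ i, i |: D).
Proof.
rewrite /admissible (tfamilyS (subsetDl F [set i]) hF) /=.
apply/disjoint_memP => v; rewrite in_setU1 => /orP[/eqP->|vD vc].
  by apply/negP/notF/tpath_start.
by rewrite (disjointFl dD) // covF in_setU vc orbT in vD.
Qed.

Lemma toggle_path_blocks : blocks (F :\ i, i |: D) = blocks (F, D).
Proof.
apply/setP => j; rewrite !inE /=.
have [->|ji] := eqVneq j i.
  rewrite iF /=; apply/free_startP; split; rewrite ?setU11 //.
    by apply: (tfamily_lt hF); apply/set0Pn; exists i.
  move=> v vi; rewrite in_setU1 (negPf (notF vi)) (negPf (notD vi)) orbF.
  by move/eqP.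
case: (j \in F) => //=.
apply/free_startP/free_startP => -[tm jD fs].
  have jD' : j \in D by move: jD; rewrite in_setU1 (negPf ji).
  split=> // v vj; rewrite covF in_setU -orbA => /orP[vi|vc].
    case/orP: (tpath_meet vi vj) => [ij|/notD]; last by rewrite jD'.
    by case/eqP: ji; apply: esym; apply: fs ij _; rewrite setU11 orbT.
  by apply: fs vj _; rewrite in_setU1; case/orP: vc => ->; rewrite ?orbT.
split=> [//||v vj vc]; first by rewrite in_setU1 jD orbT.
apply: fs vj _; rewrite covF in_setU; rewrite in_setU1 in vc.
by case/or3P: vc => [->|/eqP->|->]; rewrite ?tpath_start ?orbT.
Qed.

End TogglePath.

Lemma toggle_start_admissible F D i :
  admissible (F, D) -> free_start F D i -> admissible (i |: F, D :\ i).
Proof.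
case/andP=> /= hF dD /free_startP[tm iD fs].
have iF v : v \in tpath_verts t i -> v \in tcover t F -> False.
  move=> vi vc; have vE := fs v vi; rewrite vc in vE.
  by rewrite (vE isT) (disjointFr dD iD) in vc.
rewrite /admissible tcoverU1 /=; apply/andP; split.
  apply: tfamilyP => // a b; rewrite !in_setU1.
  case/orP=> [/eqP->|aF]; case/orP=> [/eqP->|bF]; rewrite ?eqxx // => ab.
  - apply/disjoint_memP => v vi vb; apply: iF vi _.
    exact: subsetP (tcover_sub t bF) v vb.
  - apply/disjoint_memP => v va vi; apply: iF vi _.
    exact: subsetP (tcover_sub t aF) v va.
  - exact: tfamily_disjoint hF aF bF ab.
apply/disjoint_memP => v; rewrite in_setD1 in_setU => /andP[vi vD].
case/orP=> [vp|vc]; last by rewrite (disjointFr dD vD) in vc.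
by move: vi; rewrite (fs v vp) ?vD ?orbT ?eqxx.
Qed.

Lemma toggle_spec FD i :
  admissible FD -> i \in blocks FD ->
  [/\ admissible (toggle i FD), blocks (toggle i FD) = blocks FD,
      toggle i (toggle i FD) = FD,
      (#|(toggle i FD).1| + #|(toggle i FD).2| = #|FD.1| + #|FD.2|)%N &
      odd #|(toggle i FD).1| = ~~ odd #|FD.1|].
Proof.
case: FD => F D adm; rewrite /toggle /=.
case iF : (i \in F); rewrite in_setU inE iF /= => ifs.
  have iD : i \notin D.
    rewrite (disjointFl (proj2 (andP adm))) //.
    exact: subsetP (tcover_sub t iF) i (tpath_start t i).
  rewrite in_setD1 eqxx /= setD1K // setU1K //.
  rewrite toggle_path_admissible ?toggle_path_blocks //.
  by rewrite [#|F|](cardsD1 i F) iF cardsU1 iD /= addnS negbK.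
have iD : i \in D by case/and3P: ifs.
have adm' := toggle_start_admissible adm ifs.
have back : ((i |: F) :\ i, i |: (D :\ i)) = (F, D) by rewrite setU1K ?iF // setD1K.
have := toggle_path_blocks adm' (setU11 i F); rewrite back => <-.
rewrite setU11 /=; split=> //.
  by rewrite cardsU1 iF [#|D|](cardsD1 i D) iD /= addnS.
by rewrite cardsU1 iF.
Qed.

(* Sets D of vertices without free starts: every gap of D is shorter than t. *)
Definition gapfree D := [forall i, ~~ free_start set0 D i].

Definition flip FD :=
  if [pick i in blocks FD] is Some i then toggle i FD else FD.

Lemma flip_spec FD : admissible FD ->
  [/\ admissible (flip FD), flip (flip FD) = FD,
      (flip FD == FD) = (FD.1 == set0) && gapfree FD.2 &
      flip FD != FD ->
      (#|(flip FD).1| + #|(flip FD).2| = #|FD.1| + #|FD.2|)%N /\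
      odd #|(flip FD).1| = ~~ odd #|FD.1|].
Proof.
move=> adm; rewrite /flip; case E: [pick i in blocks FD] => [i|]; last first.
  have noblock j : j \notin blocks FD by move: E; case: pickP => // /(_ j) ->.
  have F0 : FD.1 = set0.
    by apply/setP => j; have := noblock j; rewrite in_set0 in_setU => /norP[/negPf].
  rewrite E eqxx F0 eqxx; split=> //; apply/esym/forallP => j.
  by have := noblock j; rewrite in_setU inE F0 => /norP[].
have ib : i \in blocks FD by move: E; case: pickP => // j jb [<-].
have [adm' bl tK sz par] := toggle_spec adm ib.
have moved : toggle i FD != FD.
  by apply/eqP => fix_i; move: par; rewrite fix_i; case: (odd _).
rewrite bl E tK (negPf moved); split=> //; apply/esym/negbTE/nandP.
move: ib; rewrite in_setU inE => /orP[iF|ifs]; first by left; apply/set0Pn; exists i.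
have [F0|] := eqVneq FD.1 set0; last by left.
by right; apply/forallPn; exists i; rewrite negbK -F0.
Qed.

Lemma admissible0 D : admissible (set0, D).
Proof.
by rewrite /admissible tfamily0 /= tcover0; apply/disjoint_memP => v _; rewrite in_set0.
Qed.

Lemma signed_pairs_sum (g : nat -> int) :
  \sum_(FD | admissible FD) (-1) ^+ #|FD.1| * g (#|FD.1| + #|FD.2|)%N =
  \sum_(D | gapfree D) g #|D|.
Proof.
rewrite (sum_sign_reversing (f := flip)); first last.
- move=> FD /flip_spec[_ _ _ flip_moves] /flip_moves[-> par].
  by rewrite -signr_odd par signrN signr_odd mulNr.
- by move=> FD /flip_spec[].
- by move=> FD /flip_spec[].
rewrite (eq_bigl (fun FD => (FD.1 == set0) && gapfree FD.2)); last first.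
  move=> [F D]; case adm: (admissible (F, D)); first by case: (flip_spec adm).
  by apply/esym/negbTE; apply: contraFN adm => /andP[/eqP /= ->]; rewrite admissible0.
rewrite -(pair_big_dep (fun F => F == set0) (fun _ D => gapfree D)
   (fun F D => (-1) ^+ #|F| * g (#|F| + #|D|)%N)) /=.
by rewrite (big_pred1 set0) //; apply: eq_bigr => D _; rewrite cards0 mul1r.
Qed.

End Toggling.

Lemma card_pos_ord n : #|[set s : 'I_n | (0 < val s)%N]| = n.-1.
Proof.
case: n => [|n]; first by apply/eqP; rewrite -leqn0 -[leqRHS](card_ord 0) max_card.
have := cardsC [set s : 'I_n.+1 | (0 < val s)%N]; rewrite card_ord.
have -> : ~: [set s : 'I_n.+1 | (0 < val s)%N] = [set ord0].
  by apply/setP => s; rewrite !inE lt0n negbK.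
by rewrite cards1 addn1 => -[].
Qed.

Section GapFree.
Variables (m t : nat).
Local Notation V := 'I_m.+1.
Local Notation res := (res m).
Implicit Types (i j v p : V) (D : {set V}).

Lemma free_start0 D p : (t < m.+1)%N -> p \in D ->
  (forall r, (0 < r <= t)%N -> p + res r \notin D) -> free_start t set0 D p.
Proof.
move=> tm pD next; apply/free_startP; split=> // v vp.
rewrite tcover0 in_set0 /= (res_decomp p v) => vD.
have [r0|rpos] := posnP (val (v - p)%R); first by rewrite r0 res0 addr0.
by rewrite (negPf (next _ _)) ?rpos -?mem_tpath in vD.
Qed.

Lemma gapfree_pred D v : gapfree t D -> D != set0 -> v \notin D ->
  exists2 s, (0 < s < t)%N & v - res s \in D.
Proof.
move=> gf /set0Pn[u uD] vD.
pose back s := (0 < s)%N && (v - res s \in D).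
have back_u : back (val (v - u)%R).
  rewrite /back res_val subKr uD andbT lt0n.
  by apply: contraNneq vD => vu0; rewrite (subr0_eq (x := v) (y := u)) //; apply: val_inj.
case: (ex_minnP (ex_intro back _ back_u)) => s /andP[s0 sD] smin.
exists s => //; rewrite s0 /= ltnNge; apply/negP => ts.
have [tm|mt] := ltnP t m.+1; last first.
  have := leq_ltn_trans (smin _ back_u) (ltn_ord (v - u)%R).
  by rewrite ltnNge (leq_trans mt ts).
have /negP[] := forallP gf (v - res s).
apply: free_start0 => // r /andP[r0 rt].
have rs : (r <= s)%N := leq_trans rt ts.
rewrite -(subnK rs) resD opprD addrA subrK.
have [sr0|srpos] := posnP (s - r)%N; first by rewrite sr0 res0 subr0.
apply/negP => srD; have := smin _ (introT andP (conj srpos srD)).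
by rewrite leqNgt ltn_subrL s0 r0.
Qed.

Definition gap_cover D : {set V} :=
  [set p.1 + res (val p.2) | p in setX D [set s : 'I_t | (0 < val s)%N]].

Lemma card_gap_cover D : (#|gap_cover D| <= #|D| * t.-1)%N.
Proof.
by apply: leq_trans (leq_imset_card _ _) _; rewrite cardsX card_pos_ord.
Qed.

Lemma gap_coverC D : gapfree t D -> D != set0 -> ~: D \subset gap_cover D.
Proof.
move=> gf Dn0; apply/subsetP => v; rewrite inE => vD.
have [s /andP[s0 st] sD] := gapfree_pred gf Dn0 vD.
apply/imsetP; exists (v - res s, Ordinal st); first by rewrite !inE sD.
by rewrite /= subrK.
Qed.

Lemma gapfree_card D :
  (0 < t)%N -> gapfree t D -> D != set0 -> (m.+1 <= t * #|D|)%N.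
Proof.
move=> t0 gf Dn0.
have := leq_trans (subset_leq_card (gap_coverC gf Dn0)) (card_gap_cover D).
have -> : t = t.-1.+1 by rewrite prednK.
by rewrite cardsCs setCK card_ord /=; nia.
Qed.

(* When m+1 = n t, a gap-free set with n elements is stable under the shift
   by t: its gaps then all have length exactly t. *)
Lemma tight_gapfree_shift n D p :
  (0 < t)%N -> m.+1 = (n * t)%N -> gapfree t D -> #|D| = n -> p \in D ->
  p + res t \in D.
Proof.
move=> t0 mE gf cD pD.
have [tm|mt] := ltnP t m.+1; last first.
  have n0 : (0 < n)%N by rewrite lt0n; apply: contra_eqN mE => /eqP->.
  have -> : res t = 0.
    apply: val_inj; rewrite /= (_ : t = m.+1) ?modnn //.
    by apply/eqP; rewrite eqn_leq mt andbT mE leq_pmull.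
  by rewrite addr0.
have gcE : ~: D = gap_cover D.
  apply/eqP; rewrite eqEcard gap_coverC //; last by apply/set0Pn; exists p.
  rewrite [#|~: D|]cardsCs setCK card_ord; apply: leq_trans (card_gap_cover D) _.
  have -> : t = t.-1.+1 by rewrite prednK.
  by rewrite cD /=; nia.
apply: contraT => ptD; have /negP[] := forallP gf p.
apply: free_start0 => // r /andP[r0]; rewrite leq_eqVlt => /orP[/eqP->//|rt].
by rewrite -in_setC gcE; apply/imsetP; exists (p, Ordinal rt); rewrite ?inE ?pD.
Qed.

Definition residue_class (r : nat) : {set V} := [set i : V | (i %% t == r)%N].

Lemma card_residue_class n r :
  m.+1 = (n * t)%N -> (r < t)%N -> #|residue_class r| = n.
Proof.
move=> mE rt; have t0 : (0 < t)%N by apply: leq_ltn_trans rt.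
have bnd (j : 'I_n) : (r + j * t < m.+1)%N.
  by rewrite mE; have := ltn_ord j; nia.
have -> : residue_class r = [set res (r + j * t) | j : 'I_n].
  apply/setP => i; rewrite inE; apply/eqP/imsetP => [ir|[j _ ->]].
    have jn : (i %/ t < n)%N by rewrite ltn_divLR // -mE ltn_ord.
    exists (Ordinal jn) => //; apply: val_inj.
    by rewrite val_res modn_small /= -ir addnC -divn_eq.
  by rewrite val_res (modn_small (bnd j)) [(r + _)%N]addnC modnMDl modn_small.
rewrite card_imset ?card_ord // => j j' /(congr1 val).
rewrite !val_res !modn_small // => /eqP; rewrite eqn_add2l eqn_pmul2r // => /eqP.
exact: val_inj.
Qed.

Lemma residue_class_gapfree r :
  (0 < t)%N -> (t %| m.+1)%N -> gapfree t (residue_class r).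
Proof.
move=> t0 tm; apply/forallP => p; apply/negP => /free_startP[tlt pD fs].
have pt : p + res t \in residue_class r.
  by move: pD; rewrite !inE /= (modn_dvdm _ tm) (modn_small tlt) modnDr.
have := fs _ (tpath_shift _ (leqnn t)); rewrite tcover0 in_set0 pt => /(_ isT) /eqP.
rewrite -{2}[p]addr0 (inj_eq (addrI p)) => /eqP/(congr1 val).
by rewrite val_res modn_small //= => t00; rewrite t00 in t0.
Qed.

Lemma tight_gapfree_class n D p :
  (0 < t)%N -> m.+1 = (n * t)%N -> gapfree t D -> #|D| = n -> p \in D ->
  D = residue_class (p %% t).
Proof.
move=> t0 mE gf cD pD; have tm : (t %| m.+1)%N by rewrite mE dvdn_mull.
have shifts q : p + res (q * t) \in D.
  elim: q => [|q IH]; first by rewrite mul0n res0 addr0.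
  by rewrite mulSn addnC resD addrA (tight_gapfree_shift t0 mE).
apply/esym/eqP; rewrite eqEcard cD (card_residue_class mE) ?ltn_pmod // leqnn andbT.
apply/subsetP => i; rewrite inE => /eqP ip.
have /dvdnP[q qE] : (t %| val (i - p)%R)%N.
  by rewrite /dvdn -[0%N](mod0n t) -(eqn_modDr p) add0n val_subr_mod // ip.
by rewrite (res_decomp p i) qE shifts.
Qed.

Lemma card_tight_gapfree n : (0 < t)%N -> (0 < n)%N -> m.+1 = (n * t)%N ->
  #|[set D : {set V} | gapfree t D && (#|D| == n)]| = t.
Proof.
move=> t0 n0 mE; have tm : (t %| m.+1)%N by rewrite mE dvdn_mull.
have tlt : (t <= m.+1)%N by rewrite mE leq_pmull.
have -> : [set D : {set V} | gapfree t D && (#|D| == n)] =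
          [set residue_class (val r) | r : 'I_t].
  apply/setP => D; rewrite inE; apply/andP/imsetP => [[gf /eqP cD]|[r _ ->]].
    have /set0Pn[p pD] : D != set0 by rewrite -card_gt0 cD.
    exists (Ordinal (ltn_pmod p t0)) => //.
    exact: tight_gapfree_class t0 mE gf cD pD.
  by rewrite residue_class_gapfree // (card_residue_class mE (ltn_ord r)).
rewrite card_imset ?card_ord // => r r' rr'.
have : res r \in residue_class r.
  by rewrite inE val_res !modn_small // (leq_trans (ltn_ord r)).
rewrite rr' inE val_res !modn_small ?(leq_trans (ltn_ord r)) // => /eqP.
exact: val_inj.
Qed.

End GapFree.

Section SubsetSums.
Local Open Scope nat_scope.

Lemma sum_ord_widen0 (F : nat -> nat) n1 n2 : n1 <= n2 ->
  (forall j, n1 <= j -> F j = 0) -> \sum_(j < n1) F j = \sum_(j < n2) F j.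
Proof.
move=> le F0; rewrite (big_ord_widen n2 F le) big_mkcond /=; apply: eq_bigr => j _.
by case: ifP => // /negbT; rewrite -leqNgt => /F0 ->.
Qed.

Lemma sum_subsets (T : finType) (U : {set T}) (h : nat -> nat) :
  \sum_(D : {set T} | D \subset U) h #|D| = \sum_(d < #|U|.+1) 'C(#|U|, d) * h d.
Proof.
rewrite (partition_big (fun D : {set T} => (inord #|D| : 'I_#|U|.+1)) xpredT) //=.
apply: eq_bigr => d _; rewrite -cards_draws -sum_nat_const.
have sizeE (D : {set T}) : (D \subset U) && (inord #|D| == d) =
               (D \in [set A : {set T} | A \subset U & #|A| == d]).
  rewrite inE; case sDU: (D \subset U) => //=.
  have DU : #|D| < #|U|.+1 by rewrite ltnS subset_leq_card.
  by apply/eqP/eqP => [<-|Dd]; [rewrite inordK | apply: val_inj; rewrite /= inordK Dd].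
by rewrite (eq_bigl _ _ sizeE); apply: eq_bigr => D; rewrite inE => /andP[_ /eqP ->].
Qed.

Definition binw (J k s : nat) : nat := if s <= J then 'C(k, J - s) else 0.

Lemma vandermonde_subsets (T : finType) (U : {set T}) c J k : c <= J ->
  \sum_(D : {set T} | D \subset U) binw J k (c + #|D|) = 'C(#|U| + k, J - c).
Proof.
move=> cJ; rewrite (sum_subsets U (fun d => binw J k (c + d))) -binomial.Vandermonde.
set a := #|U|; set i := J - c.
have bE d : binw J k (c + d) = if d <= i then 'C(k, i - d) else 0.
  by rewrite /binw /i -leq_subRL // subnDA.
pose F d := 'C(a, d) * binw J k (c + d).
have wideA : \sum_(d < a.+1) F d = \sum_(d < (a + i).+1) F d.
  by apply: sum_ord_widen0 => [|j aj]; rewrite ?ltnS ?leq_addr // /F bin_small.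
have wideI : \sum_(d < i.+1) F d = \sum_(d < (a + i).+1) F d.
  by apply: sum_ord_widen0 => [|j ij]; rewrite ?ltnS ?leq_addl // /F bE leqNgt ij muln0.
rewrite -/(\sum_(d < a.+1) F d) wideA -wideI.
by apply: eq_bigr => j _; rewrite /F bE -ltnS ltn_ord.
Qed.

End SubsetSums.

Section Functional.
Variable t : nat.

Definition Lcoef (i : nat) : int :=
  if (t.+1 %| i)%N then ('C(i, i %/ t.+1))%:Z else 0.

Lemma LT_widen (p : {poly int}) N : (size p <= N)%N ->
  LT t p = \sum_(i < N) p`_i * Lcoef i.
Proof.
move=> le; rewrite /LT (big_ord_widen N (fun i => p`_i * Lcoef i) le) big_mkcond /=.
apply: eq_bigr => i _; case: ifP => // /negbT; rewrite -leqNgt => pi.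
by rewrite nth_default ?mul0r.
Qed.

Lemma LT_add (p q : {poly int}) : LT t (p + q) = LT t p + LT t q.
Proof.
set N := maxn (size p) (size q).
rewrite (@LT_widen _ N) ?size_polyD // (@LT_widen p N) ?leq_maxl //.
rewrite (@LT_widen q N) ?leq_maxr // -big_split /=.
by apply: eq_bigr => i _; rewrite coefD mulrDl.
Qed.

Lemma LT0 : LT t 0 = 0.
Proof. by rewrite /LT size_poly0 big_ord0. Qed.

Lemma LT_scale a (p : {poly int}) : LT t (a *: p) = a * LT t p.
Proof.
rewrite (@LT_widen _ (size p)) ?size_scale_leq // /LT mulr_sumr.
by apply: eq_bigr => i _; rewrite coefZ mulrA.
Qed.

Lemma LT_sum (I : finType) (P : pred I) (f : I -> {poly int}) :
  LT t (\sum_(i | P i) f i) = \sum_(i | P i) LT t (f i).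
Proof. exact: (big_morph _ LT_add LT0). Qed.

Lemma LT_Xn N : LT t 'X^N = Lcoef N.
Proof.
rewrite /LT size_polyXn big_ord_recr /= coefXn eqxx mul1r big1 ?add0r //.
by move=> i _; rewrite coefXn (ltn_eqF (ltn_ord i)) mul0r.
Qed.

Definition Tmoment (m k : nat) : int := LT t (Tpoly t m * 'X^k).

Lemma Tmoment_expand m k : Tmoment m k =
  \sum_(F : {set 'I_m} | tfamily t F) (-1) ^+ #|F| * Lcoef (m - t.+1 * #|F| + k).
Proof.
rewrite /Tmoment /Tpoly mulr_suml LT_sum; apply: eq_bigr => F _.
by rewrite -scalerAl LT_scale -exprD LT_Xn.
Qed.

Lemma LT_Tpoly_mul m n : LT t (Tpoly t m * Tpoly t n) =
  \sum_(G : {set 'I_n} | tfamily t G) (-1) ^+ #|G| * Tmoment m (n - t.+1 * #|G|).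
Proof.
rewrite {2}/Tpoly mulr_sumr LT_sum; apply: eq_bigr => G _.
by rewrite -scalerAr LT_scale.
Qed.

Lemma Lcoef_family m k (F : {set 'I_m.+1}) : tfamily t F ->
  Lcoef (m.+1 - t.+1 * #|F| + k) =
  if (t.+1 %| m.+1 + k)%N then
    \sum_(D : {set 'I_m.+1} | D \subset ~: tcover t F)
      (binw ((m.+1 + k) %/ t.+1) k (#|F| + #|D|))%:R
  else 0.
Proof.
move=> hF; have le := card_tcover_le hF.
set N := (m.+1 - t.+1 * #|F| + k)%N.
have NE : (m.+1 + k = N + t.+1 * #|F|)%N by rewrite /N addnAC subnK.
rewrite /Lcoef NE dvdn_addl ?dvdn_mulr //; case: ifP => // dN.
rewrite divnDl ?dvdn_mulr // mulKn // -natr_sum vandermonde_subsets ?leq_addl //.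
by rewrite addnK cardsCs setCK card_ord card_tcover // -/N natz.
Qed.

(* The moments of T_(m+1) as sums over gap-free sets: the signed sum over
   families F and uncovered sets D collapses to F = set0. *)
Lemma Tmoment_gapfree m k : Tmoment m.+1 k =
  if (t.+1 %| m.+1 + k)%N then
    \sum_(D : {set 'I_m.+1} | gapfree t D) (binw ((m.+1 + k) %/ t.+1) k #|D|)%:R
  else 0.
Proof.
rewrite Tmoment_expand; case: ifP => dv; last first.
  by apply: big1 => F hF; rewrite Lcoef_family // dv mulr0.
set J := ((m.+1 + k) %/ t.+1)%N; set w := fun s => (binw J k s)%:R : int.
transitivity (\sum_(F : {set 'I_m.+1} | tfamily t F)
    \sum_(D : {set 'I_m.+1} | D \subset ~: tcover t F) (-1) ^+ #|F| * w (#|F| + #|D|)%N).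
  by apply: eq_bigr => F hF; rewrite Lcoef_family // dv mulr_sumr.
rewrite pair_big_dep -(signed_pairs_sum m t w) /=.
by apply: eq_bigl => FD; rewrite /admissible disjoints_subset.
Qed.

Lemma Tmoment_vanish m k : (0 < t)%N -> (t * k < m.+1)%N -> Tmoment m.+1 k = 0.
Proof.
move=> t0 km; rewrite Tmoment_gapfree; case: ifP => // dv.
set J := ((m.+1 + k) %/ t.+1)%N; have JE : (m.+1 + k = J * t.+1)%N by rewrite divnK.
apply: big1 => D gf; suff -> : binw J k #|D| = 0%N by [].
have [->|Dn0] := eqVneq D set0.
  by rewrite cards0 /binw subn0 bin_small //; nia.
have Dm := gapfree_card t0 gf Dn0.
by rewrite /binw ifF //; apply/negbTE; rewrite -ltnNge; nia.
Qed.

(* Tight case m+1 = nt: besides D = set0, exactly the t residue classes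
   contribute, each with C(n, 0) = 1. *)
Lemma Tmoment_tight m n : (0 < t)%N -> (0 < n)%N -> m.+1 = (n * t)%N ->
  Tmoment m.+1 n = (t.+1)%:Z.
Proof.
move=> t0 n0 mE; rewrite Tmoment_gapfree.
have nE : (m.+1 + n = n * t.+1)%N by rewrite mE mulnS addnC.
rewrite nE dvdn_mull // mulnK //.
have wE (D : {set 'I_m.+1}) : gapfree t D ->
    (binw n n #|D|)%:R = (D == set0)%:R + (#|D| == n)%:R :> int.
  move=> gf; have [->|Dn0] := eqVneq D set0.
    by rewrite cards0 /binw subn0 binn eq_sym (negPf (lt0n_neq0 n0)) addr0.
  have : (n <= #|D|)%N by rewrite -(leq_pmul2r t0) -mE mulnC gapfree_card.
  rewrite add0r leq_eqVlt => /orP[/eqP <-|ltD].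
    by rewrite /binw leqnn subnn bin0 eqxx.
  by rewrite /binw leqNgt ltD (gtn_eqF ltD).
have gf0 : gapfree t (set0 : {set 'I_m.+1}).
  by apply/forallP => i; apply/negP => /free_startP[_]; rewrite in_set0.
rewrite (eq_bigr _ wE) big_split /= (bigD1 set0) //= eqxx big1 ?addr0; last first.
  by move=> D /andP[_ /negPf ->].
rewrite -natr_sum -big_mkcondr /= sum1_card.
have -> : #|[pred D : {set 'I_m.+1} | gapfree t D && (#|D| == n)]| =
          #|[set D : {set 'I_m.+1} | gapfree t D && (#|D| == n)]|.
  by apply: eq_card => D; rewrite !inE.
by rewrite card_tight_gapfree // -natrD natz add1n.
Qed.

End Functional.

Unset Implicit Arguments.

Theorem mainTheorem8 (t : nat) (ht : (1 <= t)%N) :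
  (forall n m : nat, (n * t < m)%N -> LT t (Tpoly t m * Tpoly t n) = 0) /\
  (forall n : nat, (1 <= n)%N ->
     LT t (Tpoly t (n * t) * Tpoly t n) = (t.+1)%:Z).
Proof.
split=> [n [//|m] ntm|n n0].
  rewrite LT_Tpoly_mul big1 // => G _; rewrite Tmoment_vanish ?mulr0 //.
  by apply: leq_ltn_trans ntm; rewrite mulnC leq_mul2r leq_subr orbT.
have [m mE] : exists m, (n * t)%N = m.+1.
  by exists (n * t).-1; rewrite prednK // muln_gt0 n0.
rewrite mE LT_Tpoly_mul (bigD1 set0) ?tfamily0 //= cards0 muln0 subn0.
rewrite Tmoment_tight // mul1r big1 ?addr0 // => G /andP[_ Gn0].
rewrite Tmoment_vanish ?mulr0 // -mE mulnC ltn_pmul2r //.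
by rewrite ltn_subrL n0 muln_gt0 card_gt0 Gn0.
Qed.
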